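(* Every non-trivial graph $G$ has a $T$-partition of width at most $2(\operatorname{tw}(G)+1)(9\Delta(G)-1)$ for some tree $T$ with $\Delta(T)\leq 6\Delta(G)$.
   Context: All graphs are finite and simple. A graph $G$ is non-trivial if $E(G)\neq\emptyset$. $\Delta(G)$ denotes the maximum degree of $G$, and $\operatorname{tw}(G)$ its treewidth. For a graph $G$ and a tree $T$, a $T$-partition of $G$ is a family $(V_x : x\in V(T))$ of pairwise disjoint subsets of $V(G)$ (some possibly empty) with union $V(G)$, indexed by the nodes of $T$, such that for every edge $vw$ of $G$, if $v\in V_x$ and $w\in V_y$ then $x=y$ or $xy\in E(T)$. The width of a $T$-partition is $\max\{|V_x| : x\in V(T)\}$. *)

From mathcomp Require Import all_boot.
Set Implicit Arguments. Unset Strict Implicit. Unset Printing Implicit Defensive.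

Definition simple_graph (V : finType) (e : rel V) : Prop :=
  symmetric e /\ irreflexive e.

Definition nontrivial (V : finType) (e : rel V) : Prop := exists u v, e u v.

Definition maxdeg (V : finType) (e : rel V) : nat :=
  \max_(v : V) #|[set w | e v w]|.

Definition is_tree (T : finType) (eT : rel T) : Prop :=
  [/\ simple_graph eT, 0 < #|T|,
      (forall x y : T, connect eT x y) &
      (forall c : seq T, 3 <= size c -> ~ ucycle eT c)].

Definition tree_decomposition (V : finType) (e : rel V)
  (I : finType) (eI : rel I) (B : I -> {set V}) : Prop :=
  [/\ is_tree eI,
      (forall v : V, exists i, v \in B i),
      (forall u v : V, e u v -> exists i, (u \in B i) && (v \in B i)) &
      (forall (v : V) (i j : I), v \in B i -> v \in B j ->
         connect (fun a b => [&& eI a b, v \in B a & v \in B b]) i j)].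

Definition td_width (V : finType) (I : finType) (B : I -> {set V}) : nat :=
  (\max_(i : I) #|B i|).-1.

Definition treewidth_is (V : finType) (e : rel V) (k : nat) : Prop :=
  (exists (I : finType) (eI : rel I) (B : I -> {set V}),
      tree_decomposition e eI B /\ td_width B = k) /\
  (forall (I : finType) (eI : rel I) (B : I -> {set V}),
      tree_decomposition e eI B -> k <= td_width B).

Definition T_partition (V : finType) (e : rel V) (T : finType) (eT : rel T)
  (P : T -> {set V}) : Prop :=
  [/\ (forall x y : T, x != y -> [disjoint P x & P y]),
      (forall v : V, exists x, v \in P x) &
      (forall (v w : V) (x y : T), e v w -> v \in P x -> w \in P y ->
         x = y \/ eT x y)].

Definition partition_width (V : finType) (T : finType) (P : T -> {set V}) : nat :=
  \max_(x : T) #|P x|.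

(* Let n = tw(G) + 1 bound the bag sizes of an optimal tree decomposition and
   D = Δ(G). The tree-partition is built top-down. A subproblem is a vertex set U
   with a set Q ⊆ U of at most 4nD vertices that must go into its root part. Root
   the decomposition tree, weight each node by the vertices of Q assigned to its
   bag, and call a node a jump when ⌊weight of its subtree / 2n⌋ is positive and
   exceeds that of each child; amortising over levels there are at most |Q| / n
   jumps. The root part R is Q plus the vertices of U in jump bags, so
   |R| ≤ 2|Q| ≤ 8nD. A component of G[U \ R] stays within one region between
   jumps, so its neighbours in R lie in one bag above the region, one jump bag
   below it, or among the fewer than 2n vertices of Q homed in it: at most 4n.
   Merging components into groups with at most 4nD neighbours in R leaves at most
   4D groups, and each group is solved recursively, with its neighbours in R as
   the new Q, and hung below R. Hence parts have size at most 8nD ≤ 2n(9D - 1)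
   and the tree has maximum degree at most 4D + 1 ≤ 6D. *)

From mathcomp Require Import all_boot zify.
Set Implicit Arguments. Unset Strict Implicit. Unset Printing Implicit Defensive.

Lemma mkseqS0 (T : Type) (f : nat -> T) n :
  mkseq f n.+1 = f 0 :: mkseq (fun i => f i.+1) n.
Proof. by rewrite /mkseq /= -(addn0 1) iotaDl -map_comp. Qed.

Lemma last_mkseq (T : Type) (f : nat -> T) n :
  last (f 0) (mkseq (fun i => f i.+1) n) = f n.
Proof. by case: n => // n; rewrite mkseqS last_rcons. Qed.

Lemma path_mkseq (T : Type) (e : rel T) (f : nat -> T) n :
  (forall u, u < n -> e (f u) (f u.+1)) -> path e (f 0) (mkseq (fun i => f i.+1) n).
Proof.
elim: n => [//|n IH] h.
rewrite mkseqS rcons_path IH; last by move=> u un; apply: h; lia.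
by rewrite last_mkseq h.
Qed.

Lemma cycle_mkseq (T : Type) (e : rel T) (f : nat -> T) n :
  (forall u, u < n -> e (f u) (f u.+1)) -> e (f n) (f 0) -> cycle e (mkseq f n.+1).
Proof.
by move=> h1 h2; rewrite mkseqS0 /= rcons_path path_mkseq // last_mkseq.
Qed.

Lemma leq_sum_subset (T : finType) (A B : {set T}) (w : T -> nat) :
  A \subset B -> \sum_(z in A) w z <= \sum_(z in B) w z.
Proof.
by move=> sAB; rewrite [X in _ <= X](big_setID A) /= (setIidPr sAB) leq_addr.
Qed.

Lemma leq_sum_bigcup (T J : finType) (A : {pred J}) (F : J -> {set T}) (w : T -> nat) :
  \sum_(z in \bigcup_(i in A) F i) w z <= \sum_(i in A) \sum_(z in F i) w z.
Proof.
rewrite (big_mkcond (fun z => z \in _)) /=.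
under [X in _ <= X]eq_bigr do rewrite (big_mkcond (fun z => z \in _)).
rewrite [X in _ <= X](exchange_big) /=.
apply: leq_sum => z _; case: ifP => // /bigcupP [i iA ziF].
by rewrite (bigD1 i) //= ziF leq_addr.
Qed.

Lemma leq_card_bigcup (T J : finType) (A : {pred J}) (F : J -> {set T}) :
  #|\bigcup_(i in A) F i| <= \sum_(i in A) #|F i|.
Proof.
rewrite -sum1_card; apply: leq_trans (leq_sum_bigcup A F (fun _ => 1)) _.
by apply: leq_sum => i _; rewrite sum1_card.
Qed.

Lemma leq_card_bigcup_uniform (T J : finType) (A : {pred J}) (F : J -> {set T}) n :
  (forall i, i \in A -> #|F i| <= n) -> #|\bigcup_(i in A) F i| <= #|A| * n.
Proof.
move=> hF; apply: leq_trans (leq_card_bigcup _ _) _.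
by rewrite -sum1_card big_distrl /=; apply: leq_sum => i /hF; rewrite mul1n.
Qed.

Lemma leq_sum_bigD1 (J : finType) (A : {pred J}) (F : J -> nat) j :
  j \in A -> F j <= \sum_(i in A) F i.
Proof. by move=> hj; rewrite (bigD1 j) //= leq_addr. Qed.

Lemma leq_sum_divn (J : finType) (A : {pred J}) (F : J -> nat) d : 0 < d ->
  \sum_(j in A) (F j %/ d) <= (\sum_(j in A) F j) %/ d.
Proof.
move=> d_gt0; rewrite leq_divRL // big_distrl /=.
by apply: leq_sum => j _; exact: leq_divM.
Qed.

Lemma sum_filter_mulb (J : finType) (A : {pred J}) (P : pred J) (F : J -> nat) :
  \sum_(j in [set j in A | P j]) F j = \sum_(j in A) P j * F j.
Proof.
rewrite big_mkcond [in RHS]big_mkcond; apply: eq_bigr => j _; rewrite inE.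
by case: (j \in A); case: (P j); rewrite ?mul1n ?mul0n.
Qed.

Section RootedTree.
Variables (I : finType) (eI : rel I).
Hypothesis treeI : is_tree eI.
Variable r : I.

Lemma tree_sym : symmetric eI. Proof. by case: treeI => [[]]. Qed.
Lemma tree_irr : irreflexive eI. Proof. by case: treeI => [[]]. Qed.

Definition root_walk z m :=
  [exists s : m.-tuple I, path eI r s && (last r s == z)].

Lemma root_walkP z m :
  reflect (exists2 s, path eI r s & (size s = m) /\ last r s = z) (root_walk z m).
Proof.
apply: (iffP existsP) => [[s /andP[ps /eqP ls]]|[s ps [<- <-]]].
  by exists s => //; rewrite size_tuple.
by exists (in_tuple s); rewrite /= ps eqxx.
Qed.

Lemma exists_root_walk z : exists m, root_walk z m.
Proof.
case: treeI => _ _ hc _; case/connectP: (hc r z) => s ps ->.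
by exists (size s); apply/root_walkP; exists s.
Qed.

Definition depth z := ex_minn (exists_root_walk z).

Lemma depth_min z m : root_walk z m -> depth z <= m.
Proof. by rewrite /depth; case: ex_minnP => m0 _; apply. Qed.

Lemma depth_walk z : root_walk z (depth z).
Proof. by rewrite /depth; case: ex_minnP. Qed.

Lemma depth_root : depth r = 0.
Proof. by apply/eqP; rewrite -leqn0; apply: depth_min; apply/root_walkP; exists [::]. Qed.

Lemma depth0_root z : depth z = 0 -> z = r.
Proof. by move=> h; case/root_walkP: (depth_walk z) => s _ []; rewrite h; case: s. Qed.

Lemma depth_edge y z : eI y z -> depth z <= (depth y).+1.
Proof.
move=> eyz; apply: depth_min; case/root_walkP: (depth_walk y) => s ps [hs ls].
apply/root_walkP; exists (rcons s z); first by rewrite rcons_path ps ls.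
by rewrite size_rcons hs last_rcons.
Qed.

Lemma exists_parent z : z != r -> exists y, eI y z && ((depth y).+1 == depth z).
Proof.
move=> nz; case/root_walkP: (depth_walk z) => s ps [hs ls].
case/lastP: s ps hs ls => [|s x] ps hs ls; first by move: ls nz => /= ->; rewrite eqxx.
move: ls ps; rewrite last_rcons rcons_path => -> /andP[ps e1].
exists (last r s); rewrite e1 /=.
have h1 : depth (last r s) <= size s by apply: depth_min; apply/root_walkP; exists s.
have h2 := depth_edge e1.
by move: hs; rewrite size_rcons => hs; apply/eqP; lia.
Qed.

(* The root is its own parent. *)
Definition parent z :=
  if z == r then r else odflt r [pick y | eI y z && ((depth y).+1 == depth z)].

Lemma parent_root : parent r = r. Proof. by rewrite /parent eqxx. Qed.

Lemma parentP z : z != r -> eI (parent z) z /\ (depth (parent z)).+1 = depth z.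
Proof.
move=> nz; rewrite /parent (negbTE nz); case: pickP => [y /andP[e1 /eqP h]|h0] //=.
by case: (exists_parent nz) => y hy; move: (h0 y); rewrite hy.
Qed.

Lemma depth_parent z : depth (parent z) = (depth z).-1.
Proof.
case: (eqVneq z r) => [->|nz]; first by rewrite parent_root depth_root.
by case: (parentP nz) => _ <-.
Qed.

Lemma depth_iter_parent m z : depth (iter m parent z) = depth z - m.
Proof. by elim: m => [|m IH]; rewrite ?subn0 // iterS depth_parent IH; lia. Qed.

Lemma iter_parent_depth z : iter (depth z) parent z = r.
Proof. by apply: depth0_root; rewrite depth_iter_parent subnn. Qed.

Lemma depth_gt0_neq_root z : 0 < depth z -> z != r.
Proof. by apply: contraTneq => ->; rewrite depth_root. Qed.

Lemma parent_edge z : z != r -> eI z (parent z).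
Proof. by case/parentP; rewrite tree_sym. Qed.

(* [z \in subtree y] iff y is an ancestor of z (or z itself). *)
Definition subtree y := [set z | iter (depth z - depth y) parent z == y].

Lemma subtree_refl y : y \in subtree y.
Proof. by rewrite inE subnn. Qed.

Lemma subtree_depth y z : z \in subtree y -> depth y <= depth z.
Proof. by rewrite inE => /eqP h; have := congr1 depth h; rewrite depth_iter_parent; lia. Qed.

Lemma subtree_root z : z \in subtree r.
Proof. by rewrite inE depth_root subn0 iter_parent_depth. Qed.

Section EdgeToParent.
Variables a b : I.
Hypotheses (eab : eI a b) (pa : parent a != b) (pb : parent b != a).

(* [meet] is the first ancestor of [a] that is also an ancestor of [b]; the
   two ancestor chains up to [meet], closed by the edge [ab], form a cycle. *)
Let exists_common : exists t, b \in subtree (iter t parent a).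
Proof. by exists (depth a); rewrite iter_parent_depth subtree_root. Qed.

Let t := ex_minn exists_common.
Let meet := iter t parent a.
Let s := depth b - depth meet.

Let meet_common : b \in subtree meet. Proof. by rewrite /meet /t; case: ex_minnP. Qed.

Let t_min t' : b \in subtree (iter t' parent a) -> t <= t'.
Proof. by rewrite /t; case: ex_minnP => m _; apply. Qed.

Let iter_b_meet : iter s parent b = meet.
Proof. by apply/eqP; move: meet_common; rewrite inE. Qed.

Let t_le_depth : t <= depth a.
Proof. by apply: t_min; rewrite iter_parent_depth subtree_root. Qed.

Let a_side_neq_root u : u < t -> iter u parent a != r.
Proof.
move=> ut; apply/negP => /eqP hu; have := t_min (t' := u).
by rewrite hu subtree_root => /(_ isT); lia.
Qed.

Let b_side_neq_root v : v < s -> iter v parent b != r.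
Proof. by move=> vs; apply: depth_gt0_neq_root; rewrite depth_iter_parent /s in vs *; lia. Qed.

Let ab_neq : a != b.
Proof. by apply: contraTneq eab => ->; rewrite tree_irr. Qed.

Let walk u := if u <= t then iter u parent a else iter (t + s - u) parent b.

Let walk_a u : u <= t -> walk u = iter u parent a.
Proof. by rewrite /walk => ->. Qed.

Let walk_b u : t < u -> walk u = iter (t + s - u) parent b.
Proof. by rewrite /walk ltnNge => /negbTE ->. Qed.

Let cycle_walk : cycle eI (mkseq walk (t + s).+1).
Proof.
apply: cycle_mkseq => [u us|].
  case: (ltngtP u t) => [ut|tu|eut].
  - rewrite !walk_a ?iterS; [|lia|lia].
    exact/parent_edge/a_side_neq_root.
  - rewrite !walk_b; [|lia|lia].
    have -> : t + s - u = (t + s - u.+1).+1 by lia.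
    by rewrite iterS; case/parentP: (b_side_neq_root (ltac:(lia) : t + s - u.+1 < s)).
  - rewrite eut walk_a // walk_b // -/meet -iter_b_meet.
    have -> : t + s - t.+1 = s.-1 by lia.
    have s_pos : s.-1 < s by lia.
    by rewrite -{1}(ltn_predK s_pos) iterS; case/parentP: (b_side_neq_root s_pos).
rewrite (walk_a (leq0n t)) /=.
case: (posnP s) => [s0|s0]; last by rewrite walk_b ?subnn 1?tree_sym //; lia.
rewrite walk_a ?s0 ?addn0 // -/meet -iter_b_meet s0 tree_sym.
by move: eab; rewrite tree_sym.
Qed.

Let uniq_walk : uniq (mkseq walk (t + s).+1).
Proof.
have sides_disjoint w w' : w' <= t -> w < s -> iter w' parent a != iter w parent b.
  move=> w't ws; apply/eqP => e1.
  have : b \in subtree (iter w' parent a).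
    by rewrite inE e1 depth_iter_parent; have -> : depth b - (depth b - w) = w by lia.
  move=> /t_min tw; have ew : w' = t by lia.
  have := congr1 depth e1; rewrite ew -/meet -iter_b_meet !depth_iter_parent /s; lia.
apply/mkseq_uniqP => u v; rewrite !inE => hu hv.
case: (leqP u t) => ut; case: (leqP v t) => vt.
- by rewrite !walk_a // => e1; have := congr1 depth e1; rewrite !depth_iter_parent; lia.
- by rewrite walk_a // walk_b // => /eqP; rewrite (negbTE (sides_disjoint _ _ ut _)) //; lia.
- by rewrite walk_b // walk_a // => /esym/eqP; rewrite (negbTE (sides_disjoint _ _ vt _)) //; lia.
- by rewrite !walk_b // => e1; have := congr1 depth e1; rewrite !depth_iter_parent; lia.
Qed.

Let size_walk : 3 <= size (mkseq walk (t + s).+1).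
Proof.
rewrite size_mkseq.
have iter_b := iter_b_meet; rewrite /meet in iter_b.
case: (posnP t) => [t0|tpos]; case: (posnP s) => [s0|spos] //=; try lia.
- by move: iter_b ab_neq; rewrite t0 s0 /= => ->; rewrite eqxx.
- case: (eqVneq s 1) => [s1|]; last lia.
  by move: iter_b pb; rewrite t0 s1 /= => ->; rewrite eqxx.
- case: (eqVneq t 1) => [t1|]; last lia.
  by move: iter_b pa; rewrite t1 s0 /= => <-; rewrite eqxx.
Qed.

Lemma edge_avoiding_parents_absurd : False.
Proof.
case: treeI => _ _ _ acyclic.
by apply: (acyclic _ size_walk); rewrite /ucycle cycle_walk uniq_walk.
Qed.

End EdgeToParent.

Lemma tree_edge_parent a b : eI a b -> parent a = b \/ parent b = a.
Proof.
move=> eab; case: (eqVneq (parent a) b) => [|pa]; first by left.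
case: (eqVneq (parent b) a) => [|pb]; first by right.
by case: (edge_avoiding_parents_absurd eab pa pb).
Qed.

Definition children y := [set c | (parent c == y) && (c != y)].

Lemma depth_child y c : c \in children y -> depth c = (depth y).+1.
Proof.
rewrite inE => /andP[/eqP pc ncy].
have ncr : c != r by apply: contra_neq ncy => cr; rewrite -pc cr parent_root.
by case: (parentP ncr) => _ <-; rewrite pc.
Qed.

Lemma subtree_child y c z : c \in children y -> z \in subtree c -> z \in subtree y.
Proof.
move=> hc zc; have dcz := subtree_depth zc; have dc := depth_child hc.
move: zc hc; rewrite !inE => /eqP hz /andP[/eqP pc _].
have -> : depth z - depth y = (depth z - depth c).+1 by lia.
by rewrite iterS hz pc.
Qed.

Lemma parent_notin_subtree y c : c \in children y -> y \notin subtree c.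
Proof. by move=> hc; apply/negP => /subtree_depth; rewrite (depth_child hc); lia. Qed.

Definition child_toward y z := iter (depth z - depth y).-1 parent z.

Lemma child_towardP y z : z \in subtree y -> z != y ->
  child_toward y z \in children y /\ z \in subtree (child_toward y z).
Proof.
move=> hz nzy; have dyz := subtree_depth hz.
move: hz; rewrite inE => /eqP hz.
have lt : depth y < depth z.
  rewrite ltn_neqAle dyz andbT; apply: contra_neq nzy => e1.
  by rewrite -hz -e1 subnn.
have dh : depth (child_toward y z) = (depth y).+1.
  by rewrite /child_toward depth_iter_parent; lia.
split.
  rewrite inE /child_toward -iterS prednK ?subn_gt0 // hz eqxx /=.
  by apply/eqP => h; move: dh; rewrite /child_toward h; lia.
by rewrite inE dh /child_toward; have -> : depth z - (depth y).+1 = (depth z - depth y).-1 by lia.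
Qed.

Lemma child_toward_child y c z :
  c \in children y -> z \in subtree c -> child_toward y z = c.
Proof.
move=> hc; rewrite inE => /eqP hz.
rewrite /child_toward (depth_child hc) in hz *.
by have -> : (depth z - depth y).-1 = depth z - (depth y).+1 by lia.
Qed.

Lemma sum_subtree (w : I -> nat) y :
  \sum_(z in subtree y) w z = w y + \sum_(c in children y) \sum_(z in subtree c) w z.
Proof.
rewrite (bigD1 y) ?subtree_refl //=; congr (_ + _).
rewrite (partition_big (child_toward y) (mem (children y))) /=; last first.
  by move=> z /andP[h1 h2]; case: (child_towardP h1 h2).
apply: eq_bigr => c hc; apply: eq_bigl => z; apply/idP/idP.
  by move=> /andP[/andP[h1 h2] /eqP <-]; case: (child_towardP h1 h2).
move=> hz; rewrite (subtree_child hc hz) (child_toward_child hc hz) eqxx andbT /=.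
by apply: contraTneq hz => ->; exact: parent_notin_subtree.
Qed.

Lemma subtree_ind (P : I -> Prop) :
  (forall y, (forall c, c \in children y -> P c) -> P y) -> forall y, P y.
Proof.
move=> h; have := @leq_bigmax _ depth.
set height := \max_(i : I) _ => le_height.
suff: forall m y, height - depth y <= m -> P y by move=> H y; exact: (H _ y (leqnn _)).
elim=> [|m IH] y hy; apply: h => c hc; have := le_height c; rewrite (depth_child hc).
  lia.
by move=> ?; apply: IH; rewrite (depth_child hc); lia.
Qed.

End RootedTree.

Section Jumps.
Variables (I : finType) (eI : rel I).
Hypothesis treeI : is_tree eI.
Variable r : I.
Local Notation parent := (parent treeI r).
Local Notation depth := (depth treeI r).
Local Notation subtree := (subtree treeI r).
Local Notation children := (children treeI r).
Variable omega : I -> nat.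
Variable tau : nat.
Hypothesis tau_gt0 : 0 < tau.

Definition weight y := \sum_(z in subtree y) omega z.
Definition level y := weight y %/ tau.

Definition jump y := (0 < level y) && [forall c in children y, level c < level y].
Definition jumps := [set y | jump y].

Lemma weight_rec y : weight y = omega y + \sum_(c in children y) weight c.
Proof. exact: sum_subtree. Qed.

Lemma sum_level_children y : \sum_(c in children y) level c <= level y.
Proof.
apply: leq_trans (leq_sum_divn _ _ tau_gt0) _; apply: leq_div2r.
by rewrite weight_rec leq_addl.
Qed.

Lemma level_child y c : c \in children y -> level c <= level y.
Proof. by move=> hc; apply: leq_trans (sum_level_children y); exact: leq_sum_bigD1. Qed.

Lemma level_jump_gt0 y : y \in jumps -> 0 < level y.
Proof. by rewrite inE => /andP[]. Qed.

Lemma nonjump_child y : y \notin jumps -> 0 < level y ->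
  exists2 c, c \in children y & level y <= level c.
Proof.
rewrite inE /jump => /nandP [|]; first by move/negbTE => ->.
by move=> /forall_inPn [c hc hlt] _; exists c; rewrite // leqNgt.
Qed.

Lemma nonjump_positive_child_uniq y c1 c2 : y \notin jumps ->
  c1 \in children y -> c2 \in children y -> 0 < level c1 -> 0 < level c2 -> c1 = c2.
Proof.
move=> yM h1 h2 l1 l2; apply/eqP; apply/negPn/negP => n12.
have ly : 0 < level y by apply: leq_trans l1 (level_child h1).
case: (nonjump_child yM ly) => c0 h0 l0.
have S := sum_level_children y.
case: (eqVneq c0 c1) => [e0|n01].
  subst c0; move: S; rewrite (bigD1 c1) //= (bigD1 c2) /=; last by rewrite h2 eq_sym.
  lia.
move: S; rewrite (bigD1 c0) //= (bigD1 c1) /=; last by rewrite h1 eq_sym.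
lia.
Qed.

Lemma nonjump_count_positive_children y : y \notin jumps ->
  \sum_(c in children y) (0 < level c) <= (0 < level y).
Proof.
move=> yM.
case: (pickP (fun c => (c \in children y) && (0 < level c))) => [c1 /andP[h1 l1]|h0].
  rewrite (bigD1 c1) //= l1 big1 /=; first by have := level_child h1; lia.
  move=> c /andP[hc nc]; case: (posnP (level c)) => [//|lc].
  by move: nc; rewrite (nonjump_positive_child_uniq yM hc h1 lc l1) eqxx.
by rewrite big1 // => c hc; move: (h0 c); rewrite hc /= => /negbT; case: (0 < level c).
Qed.

Lemma jump_sum_level_children y : y \in jumps ->
  \sum_(c in children y) level c <= (\sum_(c in children y) (0 < level c)) * (level y).-1.
Proof.
move=> yM; have ly := level_jump_gt0 yM.
move: yM; rewrite inE => /andP[_ /forall_inP hlt].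
rewrite big_distrl /=; apply: leq_sum => c hc; have := hlt c hc.
by case: (posnP (level c)) => [->//|h]; rewrite mul1n; lia.
Qed.

Definition count_jumps y := \sum_(z in subtree y) (z \in jumps : nat).

(* Each jump is paid for by two units of level. *)
Lemma count_jumps_le y : count_jumps y + (0 < level y) <= 2 * level y.
Proof.
elim/(@subtree_ind _ _ treeI r): y => y IH.
have -> : count_jumps y = (y \in jumps) + \sum_(c in children y) count_jumps c.
  exact: sum_subtree.
have hS : \sum_(c in children y) count_jumps c + \sum_(c in children y) (0 < level c)
    <= 2 * \sum_(c in children y) level c.
  by rewrite -big_split /= big_distrr /=; apply: leq_sum => c /IH.
have sup := sum_level_children y.
case: (boolP (y \in jumps)) => yM.
  have ly := level_jump_gt0 yM; have hK := jump_sum_level_children yM.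
  set K := \sum_(c in children y) (0 < level c) in hS hK.
  have : K = 0 \/ K = 1 \/ 2 <= K by lia.
  by case=> [K0|[K1|K2]]; rewrite ly; [move: hK; rewrite K0|move: hK; rewrite K1|]; lia.
case: (posnP (level y)) => ly; first by move: sup; rewrite ly; lia.
case: (nonjump_child yM ly) => c0 h0 l0.
have : 1 <= \sum_(c in children y) (0 < level c).
  by rewrite (bigD1 c0) //=; have -> : 0 < level c0 by lia.
lia.
Qed.

(* The regions are the components of the forest obtained by deleting the
   jumps; [region y] is the region whose top node is [y]. *)
Definition region y := [set z | (z \in subtree y) &&
  [forall m : 'I_(depth z - depth y).+1, iter m parent z \notin jumps]].
Definition starts_region z := (z == r) || (parent z \in jumps).
Definition climb z := if starts_region z then z else parent z.
Definition region_top z := iter (depth z) climb z.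
Definition jumps_below y := [set m in jumps | parent m \in region y].

Lemma region_top_start z : starts_region z -> region_top z = z.
Proof. by move=> hs; rewrite /region_top; elim: (depth z) => //= m ->; rewrite /climb hs. Qed.

Lemma region_top_parent z : ~~ starts_region z -> region_top z = region_top (parent z).
Proof.
move=> hs; have nzr : z != r by move: hs; rewrite /starts_region negb_or => /andP[].
have [_ hd] := parentP treeI nzr.
by rewrite /region_top -hd iterSr /climb (negbTE hs).
Qed.

Lemma region_refl z : z \notin jumps -> z \in region z.
Proof.
move=> zM; rewrite inE subtree_refl /=; apply/forallP => m.
by have -> : (m : nat) = 0 by case: m => k; rewrite subnn => hk /=; lia.
Qed.

Lemma region_parent y z : parent z \in region y -> z \notin jumps -> z \in region y.
Proof.
case: (eqVneq z r) => [->|nzr]; first by rewrite parent_root.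
have [_ hd] := parentP treeI nzr.
rewrite !inE => /andP[/eqP h1 /forallP h2] zM.
have dyp : depth y <= depth (parent z).
  by have := congr1 depth h1; rewrite depth_iter_parent; lia.
have -> : depth z - depth y = (depth (parent z) - depth y).+1 by lia.
rewrite iterSr h1 eqxx /=; apply/forallP => -[[|m] hm]; first by rewrite /= inE.
by rewrite iterSr; exact: (h2 (Ordinal (hm : m < (depth (parent z) - depth y).+1))).
Qed.

Lemma region_top_region z : z \notin jumps -> z \in region (region_top z).
Proof.
elim: {z}(depth z) {-2}z (erefl (depth z)) => [|m IH] z hz zM.
  rewrite (depth0_root hz) region_top_start ?region_refl //; last by rewrite /starts_region eqxx.
  by rewrite -(depth0_root hz).
case: (boolP (starts_region z)) => hs; first by rewrite region_top_start // region_refl.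
have nzr : z != r by move: hs; rewrite /starts_region negb_or => /andP[].
have pzM : parent z \notin jumps by move: hs; rewrite /starts_region negb_or => /andP[].
have [_ hd] := parentP treeI nzr.
by rewrite region_top_parent //; apply: region_parent => //; apply: IH => //; lia.
Qed.

Lemma region_nonjump y z : z \in region y -> y \notin jumps.
Proof.
rewrite inE => /andP[hd /forallP /(_ (Ordinal (ltnSn _)))] /=.
by move: hd; rewrite inE => /eqP ->.
Qed.

Lemma region_top_nonjump z : z \notin jumps -> region_top z \notin jumps.
Proof. by move/region_top_region/region_nonjump. Qed.

Lemma region_top_edge a b : eI a b -> a \notin jumps -> b \notin jumps ->
  region_top a = region_top b.
Proof.
move=> eab aM bM.
have nab : a != b by apply: contraTneq eab => ->; rewrite (tree_irr treeI).
case: (tree_edge_parent treeI r eab) => h.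
  have nar : a != r by apply: contra_neq nab => ar; rewrite -h ar parent_root.
  by rewrite region_top_parent ?h // /starts_region (negbTE nar) h (negbTE bM).
have nbr : b != r by apply: contra_neq nab => br; rewrite -h br parent_root.
by rewrite [region_top b]region_top_parent ?h // /starts_region (negbTE nbr) h (negbTE aM).
Qed.

Lemma region_split y : y \notin jumps ->
  region y \subset y |: \bigcup_(c in [set c in children y | c \notin jumps]) region c.
Proof.
move=> yM; apply/subsetP => z hz; rewrite !inE.
case: (eqVneq z y) => //= nzy.
have zd : z \in subtree y by move: hz; rewrite inE => /andP[].
case: (child_towardP zd nzy) => hc zc.
have dyz := subtree_depth zd; have dh := depth_child hc.
move: hz; rewrite inE => /andP[_ /forallP h].
apply/bigcupP; exists (child_toward treeI r y z).
  have dc := subtree_depth zc.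
  rewrite inE hc /=; have hlt : (depth z - depth y).-1 < (depth z - depth y).+1 by lia.
  exact: (h (Ordinal hlt)).
rewrite inE zc /=; apply/forallP => m.
have hm : m < (depth z - depth y).+1 by have := ltn_ord m; lia.
exact: (h (Ordinal hm)).
Qed.

Lemma region_weight y : y \notin jumps ->
  \sum_(z in region y) omega z + tau * level y <= weight y.
Proof.
elim/(@subtree_ind _ _ treeI r): y => y IH yM.
set NJ := [set c in children y | c \notin jumps].
have h1 : \sum_(z in region y) omega z <= omega y + \sum_(c in NJ) \sum_(z in region c) omega z.
  apply: leq_trans (leq_sum_subset _ (region_split yM)) _.
  rewrite (big_setD1 y) ?setU11 //=; apply: leq_add => //.
  apply: leq_trans (leq_sum_bigcup _ _ _); apply: leq_sum_subset.
  by apply/subsetP => z; rewrite in_setD1 in_setU1 => /andP[/negbTE ->].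
have h2 : \sum_(c in NJ) \sum_(z in region c) omega z + tau * \sum_(c in children y) level c
    <= \sum_(c in children y) weight c.
  rewrite (sum_filter_mulb _ (fun c => c \notin jumps)) big_distrr -big_split /=; apply: leq_sum => c hc.
  case: (boolP (c \in jumps)) => cM /=; last by rewrite mul1n; apply: IH.
  by rewrite mul0n add0n mulnC; exact: leq_divM.
have h3 : level y <= \sum_(c in children y) level c.
  case: (posnP (level y)) => [->//|ly].
  by case: (nonjump_child yM ly) => c0 h0 l0; apply: leq_trans l0 (leq_sum_bigD1 _ h0).
by rewrite weight_rec; have := leq_mul (leqnn tau) h3; lia.
Qed.

Lemma card_jumps_below y : y \notin jumps -> #|jumps_below y| <= (0 < level y).
Proof.
elim/(@subtree_ind _ _ treeI r): y => y IH yM.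
set NJ := [set c in children y | c \notin jumps].
have hsub : jumps_below y \subset
    [set c in children y | c \in jumps] :|: \bigcup_(c in NJ) jumps_below c.
  apply/subsetP => m; rewrite in_set => /andP[mM pmG].
  case: (eqVneq (parent m) y) => [pmy|pmny].
    rewrite in_setU; apply/orP; left; rewrite inE mM andbT inE pmy eqxx /=.
    by apply: contraNneq yM => <-.
  move/subsetP: (region_split yM) => /(_ _ pmG).
  rewrite in_setU1 (negbTE pmny) /= => /bigcupP [c hc pmc].
  by rewrite in_setU; apply/orP; right; apply/bigcupP; exists c; rewrite // in_set mM.
apply: leq_trans (subset_leq_card hsub) _; apply: leq_trans (leq_card_setU _ _) _.
apply: leq_trans (leq_add (leqnn _) (leq_card_bigcup _ _)) _.
apply: leq_trans (nonjump_count_positive_children yM).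
rewrite -sum1_card (sum_filter_mulb _ (mem jumps)) (sum_filter_mulb _ (fun c => c \notin jumps)).
rewrite -big_split; apply: leq_sum => c hc.
case: (boolP (c \in jumps)) => cM /=.
  by rewrite cM muln1 mul0n addn0 level_jump_gt0.
by rewrite (negbTE cM) mul0n mul1n; apply: IH.
Qed.

End Jumps.

Section Restrict.
Variables (V : finType) (e : rel V).

Definition restrict_rel (S : {set V}) := [rel x y | e x y && (x \in S) && (y \in S)].
Definition component (S : {set V}) c0 := [set y | connect (restrict_rel S) c0 y].

Lemma component_sub (S : {set V}) (c0 y : V) : c0 \in S -> y \in component S c0 -> y \in S.
Proof.
move=> h0; rewrite inE => /connectP [s ps ->].
elim: s c0 h0 ps => [//|b s IH] x hx /= /andP[/andP[/andP[_ _] hb] ps].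
exact: IH.
Qed.

Lemma component_self (S : {set V}) (c0 : V) : c0 \in component S c0.
Proof. by rewrite inE connect0. Qed.

End Restrict.

Section Separator.
Variables (V : finType) (e : rel V) (I : finType) (eI : rel I) (B : I -> {set V}).
Hypothesis hTD : tree_decomposition e eI B.
Variable n : nat.
Hypothesis bag_size : forall i, #|B i| <= n.
Hypothesis n_gt0 : 0 < n.
Variable r : I.
Variables U Q : {set V}.
Hypothesis QU : Q \subset U.

Lemma td_tree : is_tree eI. Proof. by case: hTD. Qed.
Lemma td_cover v : exists i, v \in B i. Proof. by case: hTD. Qed.
Lemma td_edge u v : e u v -> exists i, (u \in B i) && (v \in B i).
Proof. by case: hTD => _ _ h _; exact: h. Qed.
Lemma td_connect v i j : v \in B i -> v \in B j ->
  connect (fun a b => [&& eI a b, v \in B a & v \in B b]) i j.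
Proof. by case: hTD => _ _ _ h; exact: h. Qed.

Definition home q := odflt r [pick i | q \in B i].

Lemma home_bag q : q \in B (home q).
Proof.
rewrite /home; case: pickP => [i //|h0].
by case: (td_cover q) => i hi; move: (h0 i); rewrite hi.
Qed.

(* The threshold [2n] makes the number of jumps at most [|Q| / n]. *)
Definition home_count i := #|[set q in Q | home q == i]|.
Definition threshold := n.*2.
Lemma threshold_gt0 : 0 < threshold. Proof. by rewrite /threshold; lia. Qed.

Local Notation jumps := (jumps td_tree r home_count threshold).
Local Notation region_top := (region_top td_tree r home_count threshold).
Local Notation parent := (parent td_tree r).
Local Notation region := (region td_tree r home_count threshold).
Local Notation jumps_below := (jumps_below td_tree r home_count threshold).
Local Notation weight := (weight td_tree r home_count).
Local Notation level := (level td_tree r home_count threshold).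

Definition separator := Q :|: (U :&: \bigcup_(m in jumps) B m).

Lemma Q_sub_separator : Q \subset separator. Proof. exact: subsetUl. Qed.
Lemma separator_sub : separator \subset U.
Proof. by rewrite subUset QU subsetIl. Qed.

Lemma card_homes_in (A : {set I}) :
  #|[set q in Q | home q \in A]| = \sum_(z in A) home_count z.
Proof.
rewrite -sum1_card (partition_big home (mem A)) /=; last by move=> q; rewrite inE => /andP[].
apply: eq_bigr => z hz; rewrite /home_count -sum1_card; apply: eq_bigl => q.
by rewrite !inE; case: (eqVneq (home q) z) => [->|]; rewrite ?hz ?andbT ?andbF.
Qed.

Lemma weight_root : weight r = #|Q|.
Proof.
have -> : #|Q| = #|[set q in Q | home q \in [set: I]]|.
  by apply: eq_card => q; rewrite !inE andbT.
by rewrite card_homes_in /weight; apply: eq_bigl => z; rewrite subtree_root inE.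
Qed.

Lemma card_jumps : #|jumps| <= 2 * level r.
Proof.
have := count_jumps_le td_tree r home_count threshold_gt0 r.
have -> : count_jumps td_tree r home_count threshold r = #|jumps|.
  rewrite /count_jumps -sum1_card big_mkcond [in RHS]big_mkcond.
  by apply: eq_bigr => z _; rewrite subtree_root; case: (z \in jumps).
lia.
Qed.

Lemma card_separator : #|separator| <= 2 * #|Q|.
Proof.
apply: leq_trans (leq_card_setU _ _) _.
have h1 : #|U :&: \bigcup_(m in jumps) B m| <= #|jumps| * n.
  apply: leq_trans (subset_leq_card (subsetIr _ _)) _.
  exact: leq_card_bigcup_uniform (fun i _ => bag_size i).
have h2 : 2 * level r * n <= #|Q|.
  by rewrite mulnAC mulnC mul2n -weight_root; exact: leq_divM.
have h3 : #|jumps| * n <= 2 * level r * n by rewrite leq_mul2r card_jumps orbT.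
lia.
Qed.

Lemma outside_separator_no_jump_bag x : x \in U :\: separator ->
  forall m, m \in jumps -> x \notin B m.
Proof.
rewrite inE => /andP[xR xU] m hm; apply/negP => xm.
by move: xR; rewrite !inE xU /=; case/norP => _ /negP; apply; apply/bigcupP; exists m.
Qed.

Lemma bag_nonjump x i : (forall m, m \in jumps -> x \notin B m) -> x \in B i -> i \notin jumps.
Proof. by move=> h xi; apply/negP => /h; rewrite xi. Qed.

(* The bags containing a vertex form a subtree; avoiding jumps, it stays in one region. *)
Lemma region_top_bags x i j : (forall m, m \in jumps -> x \notin B m) ->
  x \in B i -> x \in B j -> region_top i = region_top j.
Proof.
move=> hx xi xj; case/connectP: (td_connect xi xj) => s ps ->.
elim: s i xi ps => [//|b s IH] i xi /= /andP[/and3P[eib _ xb] ps].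
by rewrite -(IH b xb ps); apply: region_top_edge => //; exact: (bag_nonjump hx).
Qed.

Section Component.
Variable c0 : V.
Hypothesis c0_out : c0 \in U :\: separator.

Local Notation C := (component e (U :\: separator) c0).

Definition comp_top := region_top (home c0).

Lemma component_region_top c i : c \in C -> c \in B i -> region_top i = comp_top.
Proof.
rewrite inE => /connectP [s ps ->].
have base i' : c0 \in B i' -> region_top i' = comp_top.
  by move=> h; apply: (region_top_bags (outside_separator_no_jump_bag c0_out)) => //; exact: home_bag.
elim: s c0 c0_out base ps i => [//|b s IH] x hx hb /= /andP[/andP[/andP[exb _] hbUR] ps] i.
apply: IH => // i' bi'; case: (td_edge exb) => k /andP[xk bk].
by rewrite -(hb k xk); apply: (region_top_bags (outside_separator_no_jump_bag hbUR)).
Qed.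

Lemma comp_top_nonjump : comp_top \notin jumps.
Proof.
exact: (region_top_nonjump threshold_gt0 (bag_nonjump (outside_separator_no_jump_bag c0_out) (home_bag c0))).
Qed.

(* The first jump bag on the tree path from [j] is the parent of the region top
   or a jump just below the region. *)
Lemma bag_path_exits_region x j : x \in B j -> j \notin jumps -> region_top j = comp_top ->
  (exists2 m, m \in jumps & x \in B m) ->
  exists2 m', x \in B m' & (m' = parent comp_top) \/ (m' \in jumps_below comp_top).
Proof.
move=> xj jM tj [m mM xm].
case/connectP: (td_connect xj xm) => s ps lm.
elim: s j xj jM tj ps lm => [|b s IH] j xj jM tj /=.
  by move=> _ ejm; move: jM; rewrite -ejm mM.
move=> /andP[/and3P[ejb _ xb] ps] lm.
case: (boolP (b \in jumps)) => bM; last first.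
  by apply: (IH b) => //; rewrite -tj; apply/esym; exact: region_top_edge.
exists b => //.
have njb : j != b by apply: contraNneq jM => ->.
case: (tree_edge_parent td_tree r ejb) => hp; [left | right].
  have njr : j != r by apply: contra_neq njb => jr; rewrite -hp jr parent_root.
  have sj : starts_region td_tree r home_count threshold j.
    by rewrite /starts_region (negbTE njr) hp bM orbT.
  by rewrite -tj region_top_start.
by rewrite inE bM /= hp -tj; exact: (region_top_region threshold_gt0 jM).
Qed.

(* The neighbours of the component in the separator lie in the bag of the parent
   of its region, in the bag of the (at most one) jump below it, or are the fewer
   than [2n] vertices of [Q] homed in the region. *)
Lemma card_component_boundary : #|[set x in separator | [exists c in C, e c x]]| <= 4 * n.
Proof.
set S := [set x in separator | _].
have hsub : S \subset B (parent comp_top) :|: \bigcup_(m in jumps_below comp_top) B m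
    :|: [set q in Q | home q \in region comp_top].
  apply/subsetP => x; rewrite inE => /andP[xR /existsP [c /andP[cC ecx]]].
  case: (td_edge ecx) => j /andP[cj xj].
  have tj := component_region_top cC cj.
  have jM : j \notin jumps.
    exact: bag_nonjump (outside_separator_no_jump_bag (component_sub c0_out cC)) cj.
  case: (boolP [exists m in jumps, x \in B m]) => [/exists_inP [m mM xm]|nex].
    case: (bag_path_exits_region xj jM tj (ex_intro2 _ _ m mM xm)) => m' xm' [<-|hb].
      by rewrite !in_setU xm'.
    by rewrite !in_setU; apply/orP; left; apply/orP; right; apply/bigcupP; exists m'.
  have hx m : m \in jumps -> x \notin B m.
    by move=> mM; apply/negP => xm; move: nex => /exists_inP []; exists m.
  have xQ : x \in Q.
    move: xR; rewrite in_setU => /orP[//|]; rewrite in_setI => /andP[_ /bigcupP [m mM xm]].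
    by move: (hx m mM); rewrite xm.
  have trx : region_top (home x) = comp_top.
    by rewrite -tj; apply: (region_top_bags hx) => //; exact: home_bag.
  rewrite !in_setU; apply/orP; right; rewrite inE xQ /= -trx.
  exact: (region_top_region threshold_gt0 (bag_nonjump hx (home_bag x))).
apply: leq_trans (subset_leq_card hsub) _; apply: leq_trans (leq_card_setU _ _) _.
apply: leq_trans (leq_add (leq_card_setU _ _) (leqnn _)) _.
have h1 := bag_size (parent comp_top).
have h2 : #|\bigcup_(m in jumps_below comp_top) B m| <= n.
  apply: leq_trans (leq_card_bigcup_uniform (fun i _ => bag_size i)) _.
  by have := card_jumps_below threshold_gt0 comp_top_nonjump; case: (0 < _) => /=; nia.
have h3 : #|[set q in Q | home q \in region comp_top]| < threshold.
  rewrite card_homes_in; have := region_weight threshold_gt0 comp_top_nonjump.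
  have := divn_eq (weight comp_top) threshold.
  have := ltn_pmod (weight comp_top) threshold_gt0; rewrite /level; lia.
have : threshold = 2 * n by rewrite /threshold -mul2n.
lia.
Qed.

End Component.
End Separator.

Lemma partition_mem_eq (V : finType) (P : {set {set V}}) U X Y v :
  partition P U -> X \in P -> Y \in P -> v \in X -> v \in Y -> X = Y.
Proof.
move=> /partition_trivIset tP hX hY vX vY.
by rewrite -(def_pblock tP hX vX) (def_pblock tP hY vY).
Qed.

Section RootedTreePartition.
Variables (V : finType) (e : rel V) (width deg : nat).

(* A tree-partition of [U] rooted at the part [R0 ⊇ Q]: [par] maps each non-root
   part to its parent, [rk] strictly decreases along [par] (so [par] is acyclic),
   non-root parts have at most [deg] children and the root at most [cr]. *)
Record rooted_tpart (U Q : {set V}) (P : {set {set V}}) (par : {set V} -> {set V})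
  (R0 : {set V}) (rk : {set V} -> nat) (cr : nat) : Prop := RootedTpart {
  tp_part : partition P U;
  tp_root : R0 \in P;
  tp_Q : Q \subset R0;
  tp_par : forall X, X \in P -> X != R0 -> par X \in P /\ rk (par X) < rk X;
  tp_edge : forall X Y v w, X \in P -> Y \in P -> v \in X -> w \in Y -> e v w ->
       X = Y \/ (X != R0 /\ par X = Y) \/ (Y != R0 /\ par Y = X);
  tp_size : forall X, X \in P -> #|X| <= width;
  tp_children : forall X, X \in P -> X != R0 ->
    #|[set Y in P | (Y != R0) && (par Y == X)]| <= deg;
  tp_root_children : #|[set Y in P | (Y != R0) && (par Y == R0)]| <= cr }.

Lemma rooted_tpart1 (U Q : {set V}) : Q \subset U -> U != set0 -> #|U| <= width ->
  rooted_tpart U Q [set U] id U (fun _ => 0) 0.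
Proof.
move=> QU U0 UW; split => //.
- by rewrite /partition cover1 eqxx trivIset1 inE eq_sym U0.
- by rewrite inE.
- by move=> X; rewrite inE => /eqP ->; rewrite eqxx.
- by move=> X Y v w; rewrite !inE => /eqP -> /eqP -> _ _ _; left.
- by move=> X; rewrite inE => /eqP ->.
- by move=> X; rewrite inE => /eqP ->; rewrite eqxx.
- by rewrite leqn0 cards_eq0; apply/eqP/setP => Y; rewrite !inE; case: (Y == U).
Qed.

Lemma rooted_tpart_weaken (U Q Q' : {set V}) P par R0 rk c c' :
  rooted_tpart U Q' P par R0 rk c -> Q \subset Q' -> c <= c' ->
  rooted_tpart U Q P par R0 rk c'.
Proof.
case=> h1 h2 h3 h4 h5 h6 h7 h8 hQ hc; split => //; first exact: subset_trans hQ h3.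
exact: leq_trans h8 hc.
Qed.

Section Graft.
Variables (U1 Q1 U2 Q2 : {set V}) (P1 P2 : {set {set V}}).
Variables (par1 par2 : {set V} -> {set V}) (R1 R2 : {set V}) (rk1 rk2 : {set V} -> nat).
Variable c1 : nat.
Hypothesis S1 : rooted_tpart U1 Q1 P1 par1 R1 rk1 c1.
Hypothesis S2 : rooted_tpart U2 Q2 P2 par2 R2 rk2 deg.
Hypothesis dU : [disjoint U1 & U2].
Hypothesis cross : forall v w, v \in U1 -> w \in U2 -> e v w || e w v ->
  (v \in R1) && (w \in Q2).

Definition graft_par X := if X \in P2 then (if X == R2 then R1 else par2 X) else par1 X.
Definition graft_rank X := if X \in P2 then (rk1 R1).+1 + rk2 X else rk1 X.

Lemma notin_P2 X : X \in P1 -> X \notin P2.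
Proof.
move=> h1; apply/negP => h2.
have s1 := partitionS (tp_part S1) h1; have s2 := partitionS (tp_part S2) h2.
case/set0Pn: (partition_neq0 (tp_part S1) h1) => x xX.
by move: dU => /disjointFr /(_ (subsetP s1 x xX)); rewrite (subsetP s2 x xX).
Qed.

Lemma R1_notin_P2 : R1 \notin P2. Proof. exact: notin_P2 (tp_root S1). Qed.

Lemma graft_par1 X : X \in P1 -> graft_par X = par1 X.
Proof. by move=> h1; rewrite /graft_par (negbTE (notin_P2 h1)). Qed.

Lemma graft_rank1 X : X \in P1 -> graft_rank X = rk1 X.
Proof. by move=> h1; rewrite /graft_rank (negbTE (notin_P2 h1)). Qed.

Lemma graft_partition : partition (P1 :|: P2) (U1 :|: U2).
Proof.
move: (tp_part S1) (tp_part S2) => /and3P[/eqP c1' t1 z1] /and3P[/eqP c2' t2 z2].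
rewrite /partition /cover bigcup_setU -/(cover P1) -/(cover P2) c1' c2' eqxx /=.
by rewrite trivIsetU ?c1' ?c2' // in_setU negb_or z1 z2.
Qed.

Lemma graft_par_rank X : X \in P1 :|: P2 -> X != R1 ->
  graft_par X \in P1 :|: P2 /\ graft_rank (graft_par X) < graft_rank X.
Proof.
rewrite in_setU => /orP[h1|h2] nX.
  case: (tp_par S1 h1 nX) => hp hr.
  by rewrite graft_par1 // !graft_rank1 // in_setU hp.
have r1 := tp_root S1.
rewrite /graft_par /graft_rank h2; case: (eqVneq X R2) => [_|nX2].
  by rewrite (negbTE R1_notin_P2) in_setU r1; split => //; lia.
case: (tp_par S2 h2 nX2) => hp hr.
by rewrite hp in_setU hp orbT; split => //; lia.
Qed.

Lemma graft_edge X Y v w : X \in P1 :|: P2 -> Y \in P1 :|: P2 -> v \in X -> w \in Y ->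
  e v w -> X = Y \/ (X != R1 /\ graft_par X = Y) \/ (Y != R1 /\ graft_par Y = X).
Proof.
have pa1 := tp_part S1; have pa2 := tp_part S2.
have r1 := tp_root S1; have r2 := tp_root S2.
have nR12 : R2 != R1 by apply: contraNneq R1_notin_P2 => <-.
have graft_R2 : graft_par R2 = R1 by rewrite /graft_par r2 eqxx.
rewrite !in_setU => /orP[h1|h2] /orP[k1|k2] vX wY evw.
- case: (tp_edge S1 h1 k1 vX wY evw) => [->|[[nx px]|[ny py]]]; first by left.
    by right; left; rewrite graft_par1.
  by right; right; rewrite graft_par1.
- have vU1 := subsetP (partitionS pa1 h1) v vX.
  have wU2 := subsetP (partitionS pa2 k2) w wY.
  case/andP: (cross vU1 wU2 (introT orP (or_introl evw))) => vR wQ.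
  rewrite (partition_mem_eq pa1 h1 r1 vX vR).
  rewrite (partition_mem_eq pa2 k2 r2 wY (subsetP (tp_Q S2) w wQ)).
  by right; right.
- have vU2 := subsetP (partitionS pa2 h2) v vX.
  have wU1 := subsetP (partitionS pa1 k1) w wY.
  case/andP: (cross wU1 vU2 (introT orP (or_intror evw))) => wR vQ.
  rewrite (partition_mem_eq pa1 k1 r1 wY wR).
  rewrite (partition_mem_eq pa2 h2 r2 vX (subsetP (tp_Q S2) v vQ)).
  by right; left.
- have neqR1 Z : Z \in P2 -> Z != R1 by move=> hZ; apply: contraNneq R1_notin_P2 => <-.
  case: (tp_edge S2 h2 k2 vX wY evw) => [->|[[nx px]|[ny py]]]; first by left.
    by right; left; rewrite neqR1 // /graft_par h2 (negbTE nx).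
  by right; right; rewrite neqR1 // /graft_par k2 (negbTE ny).
Qed.

Lemma graft_children X : X \in P1 :|: P2 -> X != R1 ->
  #|[set Y in P1 :|: P2 | (Y != R1) && (graft_par Y == X)]| <= deg.
Proof.
rewrite in_setU => /orP[h1|h2] nX.
  apply: leq_trans (tp_children S1 h1 nX); apply: subset_leq_card; apply/subsetP => Y.
  rewrite !inE => /andP[/orP[k1|k2] /andP[nY /eqP pY]].
    by rewrite k1 nY -pY graft_par1 // eqxx.
  exfalso; move: pY; rewrite /graft_par k2; case: (eqVneq Y R2) => [_|nY2] /= e1.
    by move: nX; rewrite -e1 eqxx.
  by case: (tp_par S2 k2 nY2) => hp _; move: (notin_P2 h1); rewrite -e1 hp.
have nX1 : X != R1 by apply: contraNneq R1_notin_P2 => <-.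
have hch : [set Y in P1 :|: P2 | (Y != R1) && (graft_par Y == X)]
    \subset [set Y in P2 | (Y != R2) && (par2 Y == X)].
  apply/subsetP => Y; rewrite !inE => /andP[/orP[k1|k2] /andP[nY /eqP pY]].
    case: (tp_par S1 k1 nY) => hp _.
    by move: (notin_P2 hp); rewrite -graft_par1 // pY h2.
  rewrite k2 /=; move: pY; rewrite /graft_par k2.
  case: (eqVneq Y R2) => [_|nY2] /= e1; last by rewrite e1 eqxx.
  by move: nX1; rewrite -e1 eqxx.
apply: leq_trans (subset_leq_card hch) _.
case: (eqVneq X R2) => [->|nX2]; last by have := tp_children S2 h2 nX2.
by have := tp_root_children S2.

Qed.

Lemma graft_root_children :
  #|[set Y in P1 :|: P2 | (Y != R1) && (graft_par Y == R1)]| <= c1.+1.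
Proof.
have hch : [set Y in P1 :|: P2 | (Y != R1) && (graft_par Y == R1)]
    \subset R2 |: [set Y in P1 | (Y != R1) && (par1 Y == R1)].
  apply/subsetP => Y; rewrite !inE => /andP[/orP[k1|k2] /andP[nY /eqP pY]].
    by move: pY; rewrite graft_par1 // => ->; rewrite k1 nY eqxx !orbT.
  move: pY; rewrite /graft_par k2; case: (eqVneq Y R2) => [->|nY2] //= e1.
  by case: (tp_par S2 k2 nY2) => hp _; move: R1_notin_P2; rewrite -e1 hp.
apply: leq_trans (subset_leq_card hch) _.
by rewrite cardsU1; have := tp_root_children S1; case: (R2 \notin _) => /=; lia.
Qed.

Lemma rooted_tpart_graft :
  rooted_tpart (U1 :|: U2) Q1 (P1 :|: P2) graft_par R1 graft_rank c1.+1.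
Proof.
split.
- exact: graft_partition.
- by rewrite in_setU (tp_root S1).
- exact: tp_Q S1.
- exact: graft_par_rank.
- exact: graft_edge.
- by move=> X; rewrite in_setU => /orP[h|h]; [have := tp_size S1 h | have := tp_size S2 h].
- exact: graft_children.
- exact: graft_root_children.
Qed.

End Graft.
End RootedTreePartition.

Section Grouping.
Variables (V : finType) (e : rel V).
Hypothesis e_sym : symmetric e.
Variable D : nat.
Hypothesis deg_le : forall v, #|[set w | e v w]| <= D.
Variable cap : nat.
Variables U R : {set V}.

Local Notation out := (U :\: R).

Definition nbhd := [set w | [exists x in R, e x w]].
Definition load (X : {set V}) := #|nbhd :&: X|.
Definition closed_out (X : {set V}) :=
  [forall x in X, forall y, (e x y && (y \in out)) ==> (y \in X)].

Definition grouping (G : {set {set V}}) :=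
  [&& partition G out, [forall X in G, closed_out X] & [forall X in G, load X <= cap]].

Lemma grouping_partition G : grouping G -> partition G out. Proof. by case/and3P. Qed.
Lemma grouping_closed G X : grouping G -> X \in G -> closed_out X.
Proof. by case/and3P => _ /forall_inP h _; exact: h. Qed.
Lemma grouping_load G X : grouping G -> X \in G -> load X <= cap.
Proof. by case/and3P => _ _ /forall_inP h; exact: h. Qed.

Lemma card_nbhd : #|nbhd| <= D * #|R|.
Proof.
have -> : nbhd = \bigcup_(x in R) [set w | e x w].
  apply/setP => w; rewrite inE; apply/existsP/bigcupP => [[x /andP[xR exw]]|[x xR]].
    by exists x; rewrite ?inE.
  by rewrite inE => exw; exists x; rewrite xR.
by rewrite mulnC; apply: leq_card_bigcup_uniform.
Qed.

Lemma restrict_rel_sym : symmetric (restrict_rel e out).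
Proof. by move=> x y /=; rewrite e_sym; case: (x \in _); case: (y \in _); rewrite ?andbT ?andbF. Qed.

Lemma component_eq x z : z \in component e out x -> component e out z = component e out x.
Proof.
rewrite inE => hxz; apply/setP => y; rewrite !inE.
apply/idP/idP => h; first exact: connect_trans hxz h.
by rewrite (sym_connect_sym restrict_rel_sym) in hxz; exact: connect_trans hxz h.
Qed.

Definition components := [set component e out c0 | c0 in out].

Lemma grouping_components :
  (forall c0, c0 \in out -> #|[set x in R | [exists c in component e out c0, e c x]]| * D <= cap) ->
  grouping components.
Proof.
move=> hb; apply/and3P; split.
- apply/and3P; split.
  + apply/eqP/setP => y; apply/bigcupP/idP => [[X /imsetP [c0 h0 ->] hy]|hy].
      exact: component_sub h0 hy.
    by exists (component e out y); [apply/imsetP; exists y | exact: component_self].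
  + apply/trivIsetP => X Y /imsetP [x hx ->] /imsetP [y hy ->] nXY.
    apply/pred0P => z /=; apply/negP => /andP[zx zy].
    by move: nXY; rewrite -(component_eq zx) -(component_eq zy) eqxx.
  + by apply/imsetP => -[c0 h0 e0]; move: (component_self e out c0); rewrite -e0 inE.
- apply/forall_inP => X /imsetP [c0 h0 ->]; apply/forall_inP => x hx.
  apply/forallP => y; apply/implyP => /andP[exy hy].
  have xout := component_sub h0 hx.
  move: hx; rewrite !inE => hx; apply: connect_trans hx (connect1 _).
  by rewrite /= exy xout hy.
- apply/forall_inP => X /imsetP [c0 h0 ->]; apply: leq_trans (hb c0 h0).
  set bd := [set x in R | _].
  have hsub : nbhd :&: component e out c0 \subset \bigcup_(x in bd) [set w | e x w].
    apply/subsetP => w; rewrite !inE => /andP[/existsP [x /andP[xR exw]] wc].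
    apply/bigcupP; exists x; last by rewrite inE.
    by rewrite inE xR /=; apply/existsP; exists w; rewrite e_sym exw andbT inE.
  apply: leq_trans (subset_leq_card hsub) _.
  by apply: leq_card_bigcup_uniform => x _; exact: deg_le.
Qed.

Lemma grouping_merge G X Y : grouping G -> X \in G -> Y \in G -> X != Y ->
  load X + load Y <= cap ->
  grouping ((X :|: Y) |: (G :\ X :\ Y)) /\ #|(X :|: Y) |: (G :\ X :\ Y)| < #|G|.
Proof.
move=> vG hX hY nXY hl.
have pG := grouping_partition vG.
have YGX : Y \in G :\ X by rewrite in_setD1 hY eq_sym nXY.
split; last first.
  rewrite cardsU1 (cardsD1 X G) hX (cardsD1 Y (G :\ X)) YGX.
  by case: (_ \notin _).
have XYout : X :|: Y \subset out by rewrite subUset !(partitionS pG).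
apply/and3P; split.
- have -> : out = (X :|: Y) :|: (out :\: X :\: Y).
    by rewrite setDDl -{1}(setID out (X :|: Y)) (setIidPr XYout).
  apply: partitionU1; first by rewrite partitionD1 // partitionD1.
    by case/set0Pn: (partition_neq0 pG hX) => x xX; apply/set0Pn; exists x; rewrite inE xX.
  by rewrite setDDl disjoint_sym disjoints_subset setDE subsetIr.
- apply/forall_inP => Z; rewrite !inE => /orP[/eqP ->|/andP[_ /andP[_ hZ]]];
    last exact: grouping_closed vG hZ.
  apply/forall_inP => x; rewrite inE => hx; apply/forallP => y; apply/implyP => exy.
  rewrite inE; case/orP: hx => hx.
    by move: (grouping_closed vG hX) => /forall_inP /(_ x hx) /forallP /(_ y) /implyP /(_ exy) ->.
  by move: (grouping_closed vG hY) => /forall_inP /(_ x hx) /forallP /(_ y) /implyP /(_ exy) ->; rewrite orbT.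
- apply/forall_inP => Z; rewrite !inE => /orP[/eqP ->|/andP[_ /andP[_ hZ]]];
    last exact: grouping_load vG hZ.
  by apply: leq_trans hl; rewrite /load setIUr; exact: leq_card_setU.
Qed.

(* Take a grouping with fewest groups. *)
Lemma exists_min_grouping : grouping components -> exists G, grouping G /\
  (forall X Y, X \in G -> Y \in G -> X != Y -> cap < load X + load Y).
Proof.
move=> v0.
have ex : exists m, [exists G : {set {set V}}, grouping G && (#|G| == m)].
  by exists #|components|; apply/existsP; exists components; rewrite v0 eqxx.
case: (ex_minnP ex) => m /existsP [G /andP[vG /eqP cG]] hmin.
exists G; split => // X Y hX hY nXY; rewrite ltnNge; apply/negP => hl.
case: (grouping_merge vG hX hY nXY hl) => v' c'.
have := hmin #|(X :|: Y) |: (G :\ X :\ Y)|; rewrite -cG.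
have -> : [exists G0, grouping G0 && (#|G0| == #|(X :|: Y) |: (G :\ X :\ Y)|)].
  by apply/existsP; exists ((X :|: Y) |: (G :\ X :\ Y)); rewrite v' eqxx.
by move=> /(_ isT); lia.
Qed.

Lemma sum_load_le G : partition G out -> \sum_(X in G) load X <= #|nbhd|.
Proof.
case/and3P => /eqP cG tG _.
have -> : \sum_(X in G) load X = \sum_(X in G) \sum_(x in X) (x \in nbhd : nat).
  apply: eq_bigr => X _; rewrite /load -sum1_card big_mkcond [in RHS]big_mkcond /=.
  by apply: eq_bigr => x _; rewrite inE; case: (x \in nbhd); case: (x \in X).
rewrite -(@big_trivIset V nat 0 addn G (fun x => (x \in nbhd : nat)) tG) /= -sum1_card big_mkcond [in X in _ <= X]big_mkcond /=.
by apply: leq_sum => x _; case: (x \in nbhd); case: (x \in cover G).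
Qed.

(* All groups but at most one carry more than half the capacity. *)
Lemma card_min_grouping G : grouping G ->
  (forall X Y, X \in G -> Y \in G -> X != Y -> cap < load X + load Y) ->
  #|G| <= (2 * #|nbhd|) %/ cap.+1 + 1.
Proof.
move=> vG hpair; set H := [set X in G | cap < 2 * load X].
have h1 : #|G :\: H| <= 1.
  apply/card_le1_eqP => X Y; rewrite !inE => /andP[nX hX] /andP[nY hY].
  apply/eqP/negPn/negP => nXY; have := hpair Y X hY hX nXY.
  by move: nX nY; rewrite hX hY /= -!leqNgt; lia.
have h2 : #|H| * cap.+1 <= 2 * #|nbhd|.
  apply: leq_trans _ (leq_mul (leqnn 2) (sum_load_le (grouping_partition vG))).
  rewrite big_distrr /= -sum1_card big_distrl /=.
  apply: leq_trans (_ : \sum_(X in H) 2 * load X <= _).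
    by apply: leq_sum => X; rewrite inE mul1n => /andP[_].
  by apply: leq_sum_subset; apply/subsetP => X; rewrite inE => /andP[].
have h3 : #|H| <= (2 * #|nbhd|) %/ cap.+1 by rewrite leq_divRL.
have hHG : H \subset G by apply/subsetP => X; rewrite inE => /andP[].
by have := cardsID H G; rewrite (setIidPr hHG); lia.
Qed.

End Grouping.

Section Construction.
Variables (V : finType) (e : rel V) (I : finType) (eI : rel I) (B : I -> {set V}).
Hypothesis hTD : tree_decomposition e eI B.
Hypothesis e_sym : symmetric e.
Variable n : nat.
Hypothesis bag_size : forall i, #|B i| <= n.
Hypothesis n_gt0 : 0 < n.
Variable r : I.
Variable D : nat.
Hypothesis deg_le : forall v, #|[set w | e v w]| <= D.
Hypothesis D_gt0 : 0 < D.

Local Notation cap := (4 * n * D).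
Local Notation tpart := (rooted_tpart e (8 * n * D) (4 * D)).

Lemma exists_small_grouping (U Q : {set V}) : Q \subset U -> #|Q| <= cap ->
  exists2 G, grouping e cap U (separator hTD n r U Q) G & #|G| <= 4 * D.
Proof.
move=> QU hQ; set RR := separator hTD n r U Q.
have hb c0 : c0 \in U :\: RR ->
    #|[set x in RR | [exists c in component e (U :\: RR) c0, e c x]]| * D <= cap.
  by move=> h0; rewrite leq_mul2r (card_component_boundary bag_size n_gt0 QU h0) orbT.
case: (exists_min_grouping (grouping_components e_sym deg_le hb)) => G [vG hpair].
exists G => //.
have hR : #|RR| <= 2 * #|Q| := card_separator hTD bag_size n_gt0 r QU.
have hN : #|nbhd e RR| <= D * (2 * cap).
  by apply: leq_trans (card_nbhd deg_le RR) _; rewrite leq_mul2l; apply/orP; right; lia.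
have : 2 * #|nbhd e RR| < 4 * D * cap.+1 by nia.
have := card_min_grouping vG hpair.
by rewrite -ltn_divLR //; lia.
Qed.

Lemma rooted_tpart_graft_groups (U RR Q : {set V}) (G : {set {set V}}) :
  RR \subset U -> Q \subset RR -> RR != set0 -> #|RR| <= 8 * n * D ->
  grouping e cap U RR G ->
  (forall X, X \in G -> exists P par R0 rk, tpart X (nbhd e RR :&: X) P par R0 rk (4 * D)) ->
  forall s, uniq s -> {subset s <= G} ->
  exists P par rk, tpart (RR :|: \bigcup_(X <- s) X) Q P par RR rk (size s).
Proof.
move=> RU QR R0 cR vG hX; have pG := grouping_partition vG.
elim=> [|X s IH] /=.
  move=> _ _; rewrite big_nil setU0.
  by exists [set RR], id, (fun _ => 0); apply: rooted_tpart1.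
move=> /andP[Xs us] hs.
have hs' : {subset s <= G} by move=> Y hY; apply: hs; rewrite inE hY orbT.
case: (IH us hs') => P1 [par1 [rk1 S1]].
have XG : X \in G by apply: hs; rewrite inE eqxx.
case: (hX X XG) => P2 [par2 [R2 [rk2 S2]]].
have XUR : X \subset U :\: RR by exact: partitionS pG XG.
have dXY Y : Y \in s -> [disjoint Y & X].
  move=> hY; apply: (trivIsetP (partition_trivIset pG)); [exact: hs' | done |].
  by apply: contraNneq Xs => <-.
have dU : [disjoint RR :|: \bigcup_(Y <- s) Y & X].
  rewrite -setI_eq0 setIUl setU_eq0; apply/andP; split.
    rewrite setI_eq0; apply/pred0P => z /=; apply/negP => /andP[zR zX].
    by move: (subsetP XUR z zX); rewrite inE zR.
  rewrite setI_eq0 disjoint_sym bigcup_seq; apply: bigcup_disjoint => Y hY.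
  by rewrite disjoint_sym; exact: dXY.
(* Groups are edge-closed outside [RR], so edges leaving [X] end in [RR]. *)
have cross v w : v \in RR :|: \bigcup_(Y <- s) Y -> w \in X -> e v w || e w v ->
    (v \in RR) && (w \in nbhd e RR :&: X).
  move=> hv wX evw.
  have evw' : e v w by case/orP: evw => // h; rewrite e_sym.
  have wUR := subsetP XUR w wX.
  have vR : v \in RR.
    move: hv; rewrite in_setU => /orP[//|]; rewrite bigcup_seq => /bigcupP [Y hY vY].
    move: (grouping_closed vG (hs' Y hY)) => /forall_inP /(_ v vY) /forallP /(_ w).
    rewrite evw' wUR /= => wY.
    by move: (dXY Y hY) => /disjointFr /(_ wY); rewrite wX.
  by rewrite vR /= in_setI wX andbT inE; apply/existsP; exists v; rewrite vR.
have -> : RR :|: \bigcup_(Y <- X :: s) Y = (RR :|: \bigcup_(Y <- s) Y) :|: X.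
  by rewrite big_cons setUA setUAC.
by do 3 eexists; exact: rooted_tpart_graft S1 S2 dU cross.
Qed.

(* Induction on [|U|]: the separator of [Q] becomes the root part, and each group
   is handled recursively with its neighbours of the separator as new [Q]. *)
Lemma rooted_tpart_exists m (U Q : {set V}) : #|U| <= m -> Q \subset U -> #|Q| <= cap ->
  U != set0 -> exists P par R0 rk, tpart U Q P par R0 rk (4 * D).
Proof.
elim: m U Q => [|m IH] U Q hU QU hQ U0.
  by move: U0; rewrite -card_gt0; lia.
have [v0 v0U] := set0Pn _ U0.
pose Q' := if Q == set0 then [set v0] else Q.
have QQ' : Q \subset Q' by rewrite /Q'; case: eqP => [->|//]; rewrite sub0set.
have Q'U : Q' \subset U by rewrite /Q'; case: eqP => // _; rewrite sub1set.
have hQ' : #|Q'| <= cap.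
  by rewrite /Q'; case: eqP => // _; rewrite cards1 -!mulnA; have := muln_gt0 n D; lia.
have Q'0 : Q' != set0.
  by rewrite /Q'; case: (boolP (Q == set0)) => // _; apply/set0Pn; exists v0; rewrite inE.
set RR := separator hTD n r U Q'.
have RQ : Q' \subset RR := Q_sub_separator hTD n r U Q'.
have RU : RR \subset U := separator_sub hTD n r Q'U.
have cR : #|RR| <= 2 * #|Q'| := card_separator hTD bag_size n_gt0 r Q'U.
have R0 : RR != set0 by case/set0Pn: Q'0 => q hq; apply/set0Pn; exists q; exact: (subsetP RQ).
case: (exists_small_grouping Q'U hQ') => G vG cG.
have hX X : X \in G -> exists P par R0 rk, tpart X (nbhd e RR :&: X) P par R0 rk (4 * D).
  move=> hXG; have sX : X \subset U :\: RR := partitionS (grouping_partition vG) hXG.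
  apply: IH; [|exact: subsetIr|exact: grouping_load vG hXG|].
    apply: leq_trans (subset_leq_card sX) _; rewrite cardsD (setIidPr RU).
    by have := card_gt0 RR; rewrite R0; lia.
  exact: partition_neq0 (grouping_partition vG) hXG.
have sub : {subset enum (mem G) <= G} by move=> X; rewrite mem_enum.
have cR' : #|RR| <= 8 * n * D by lia.
case: (rooted_tpart_graft_groups RU (subset_trans QQ' RQ) R0 cR' vG hX (enum_uniq (mem G)) sub)
  => P [par [rk S]].
exists P, par, RR, rk; move: S; rewrite bigcup_seq.
have -> : \bigcup_(X in enum (mem G)) X = U :\: RR.
  rewrite -(cover_partition (grouping_partition vG)) /cover.
  by apply: eq_bigl => X; rewrite mem_enum.
have -> : RR :|: U :\: RR = U by rewrite -{1}(setIidPr RU) setID.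
rewrite -cardE => S.
exact: rooted_tpart_weaken S (subxx _) cG.
Qed.

End Construction.

Section PartTree.
Variables (V : finType) (e : rel V) (width deg : nat) (U Q : {set V}) (P : {set {set V}}).
Variables (par : {set V} -> {set V}) (R0 : {set V}) (rk : {set V} -> nat) (cr : nat).
Hypothesis S : rooted_tpart e width deg U Q P par R0 rk cr.

Definition part_node := {X : {set V} | X \in P}.
Definition part_adj (x y : part_node) := (val x != val y) &&
  (((val x != R0) && (par (val x) == val y)) || ((val y != R0) && (par (val y) == val x))).

Lemma part_adj_sym : symmetric part_adj.
Proof. by move=> x y; rewrite /part_adj eq_sym orbC. Qed.

Definition root_node : part_node := exist _ R0 (tp_root S).

Lemma connect_root_node m (x : part_node) : rk (val x) <= m -> connect part_adj x root_node.
Proof.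
elim: m x => [|m IH] x hx; case: (eqVneq (val x) R0) => [ex|nx];
  try by have -> : x = root_node by apply: val_inj.
  by case: (tp_par S (valP x) nx) => _; lia.
case: (tp_par S (valP x) nx) => hp hr.
have hm : rk (par (val x)) <= m by lia.
apply: connect_trans (IH (exist _ (par (val x)) hp) hm).
apply: connect1; rewrite /part_adj /= nx eqxx /= andbT.
by apply: contraTneq hr => <-; rewrite ltnn.
Qed.

Lemma part_adj_max_rank (x y : part_node) : part_adj x y -> rk (val y) <= rk (val x) ->
  par (val x) = val y.
Proof.
case/andP => _ /orP[/andP[_ /eqP //]|/andP[ny /eqP h]].
by case: (tp_par S (valP y) ny) => _; rewrite h ltnNge => /negbTE ->.
Qed.

(* At a node of maximal rank on a cycle, both cycle neighbours are its parent. *)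
Lemma part_adj_acyclic (c : seq part_node) : 3 <= size c -> ~ ucycle part_adj c.
Proof.
move=> hc /andP[cc uc].
have c0 : head root_node c \in c by case: c hc {cc uc} => // a c' _; rewrite inE eqxx.
case: (arg_maxnP (fun x : part_node => rk (val x)) c0) => x xc xmax.
have := rot_index xc; set i := index x c => hrot.
move: cc uc hc; rewrite -(rot_cycle i) -(rot_uniq i) -(size_rot i) hrot.
set s := drop i.+1 c ++ take i c.
have sc z : z \in s -> z \in c by move=> zs; rewrite -(mem_rot i) hrot inE zs orbT.
case: s sc => [|y s'] sc //= /andP[exy ps] /andP[_ uys] hs.
case/lastP: s' sc hs uys ps => [|s'' z] sc hs //= uys.
rewrite rcons_path last_rcons => /andP[_ ezx].
have ey := part_adj_max_rank exy (xmax y (sc y (mem_head _ _))).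
have ez : par (val x) = val z.
  apply: part_adj_max_rank; first by rewrite part_adj_sym.
  by apply: xmax; apply: sc; rewrite inE mem_rcons mem_head orbT.
have yz : y = z by apply: val_inj; rewrite -ey -ez.
by move: uys; rewrite yz mem_rcons mem_head.
Qed.

Lemma part_tree_is_tree : is_tree part_adj.
Proof.
split.
- by split; [exact: part_adj_sym | by move=> x; rewrite /part_adj eqxx].
- by apply/card_gt0P; exists root_node.
- move=> x y; apply: connect_trans (connect_root_node (leqnn _)) _.
  by rewrite (sym_connect_sym part_adj_sym); exact: connect_root_node.
- exact: part_adj_acyclic.
Qed.

(* A node is adjacent to its parent and to at most [deg] children. *)
Lemma part_tree_maxdeg : cr <= deg -> maxdeg part_adj <= deg.+1.
Proof.
move=> hc; apply/bigmax_leqP => x _.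
have hsub : [set y | part_adj x y] \subset [set y : part_node | val y == par (val x)] :|:
    [set y : part_node | (val y != R0) && (par (val y) == val x)].
  apply/subsetP => y; rewrite inE => /andP[_ /orP[/andP[_ /eqP h]|/andP[h1 h2]]].
    by rewrite in_setU inE h eqxx.
  by rewrite in_setU [in X in _ || X]inE h1 h2 orbT.
apply: leq_trans (subset_leq_card hsub) _; apply: leq_trans (leq_card_setU _ _) _.
have h1 : #|[set y : part_node | val y == par (val x)]| <= 1.
  by apply/card_le1_eqP => y z; rewrite !inE => /eqP hy /eqP hz; apply: val_inj; rewrite hy hz.
have h2 : #|[set y : part_node | (val y != R0) && (par (val y) == val x)]| <= deg.
  set A := [set y : part_node | _].
  rewrite -(card_imset _ val_inj); apply: leq_trans
    (_ : #|[set Y in P | (Y != R0) && (par Y == val x)]| <= deg).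
    apply: subset_leq_card; apply/subsetP => Y /imsetP [y hy ->].
    by rewrite inE (valP y) /=; move: hy; rewrite inE.
  case: (eqVneq (val x) R0) => [->|nx]; first exact: leq_trans (tp_root_children S) hc.
  by have := tp_children S (valP x) nx.
lia.
Qed.

Lemma part_tree_T_partition : U = setT -> T_partition e part_adj (fun x : part_node => val x).
Proof.
move=> eU; have neq_val (x y : part_node) : x != y -> val x != val y.
  by apply: contra => /eqP h; apply/eqP; apply: val_inj.
split.
- move=> x y /neq_val; move/trivIsetP: (partition_trivIset (tp_part S)).
  by apply; exact: valP.
- move=> v; have vP : v \in cover P by rewrite (cover_partition (tp_part S)) eU inE.
  by exists (exist (fun X => X \in P) _ (pblock_mem vP)); rewrite /= mem_pblock.
- move=> v w x y evw vx wy; case: (eqVneq x y) => [->|/neq_val nv]; [by left | right].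
  case: (tp_edge S (valP x) (valP y) vx wy evw) => [h|[[nx h]|[ny h]]].
  + by move: nv; rewrite h eqxx.
  + by rewrite /part_adj nv nx h eqxx.
  + by rewrite /part_adj nv ny h eqxx orbT.
Qed.

Lemma part_tree_width : partition_width (fun x : part_node => val x) <= width.
Proof. by apply/bigmax_leqP => x _; have := tp_size S (valP x). Qed.

End PartTree.

Theorem theorem6 (V : finType) (e : rel V) (k : nat) :
  simple_graph e -> nontrivial e -> treewidth_is e k ->
  exists (T : finType) (eT : rel T) (P : T -> {set V}),
    [/\ is_tree eT, maxdeg eT <= 6 * maxdeg e,
        T_partition e eT P &
        partition_width P <= 2 * (k + 1) * (9 * maxdeg e - 1)].
Proof.
move=> [e_sym _] [u [v euv]] [[I [eI [B [hTD hw]]]] _].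
have bag_size i : #|B i| <= k + 1.
  by have := @leq_bigmax _ (fun i => #|B i|) i; move: hw; rewrite /td_width; lia.
have [r _] : exists r : I, r \in I.
  by case: hTD => [[_ /card_gt0P [x _] _ _] _ _ _]; exists x.
have deg_le w : #|[set z | e w z]| <= maxdeg e.
  exact: (@leq_bigmax _ (fun w => #|[set z | e w z]|) w).
have D_gt0 : 0 < maxdeg e.
  by apply: leq_trans (deg_le u); rewrite card_gt0; apply/set0Pn; exists v; rewrite inE.
have V_neq0 : [set: V] != set0 by apply/set0Pn; exists u.
have n_gt0 : 0 < k + 1 by rewrite addn1.
have [|P [par [R0 [rk S]]]] := rooted_tpart_exists hTD e_sym bag_size n_gt0
  r deg_le D_gt0 (leqnn #|[set: V]|) (sub0set _) _ V_neq0.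
  by rewrite cards0.
exists (part_node P), (part_adj par R0), (fun x : part_node P => val x); split.
- exact: part_tree_is_tree S.
- by apply: leq_trans (part_tree_maxdeg S (leqnn _)) _; lia.
- exact: part_tree_T_partition S (erefl _).
- by apply: leq_trans (part_tree_width S) _; nia.
Qed.
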